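(* If $X$ and $Y$ are metric spaces with asymptotic property C, then the product $X\times Y$ has asymptotic property C.
   Context: For $R>0$, a family $\mathcal U$ of nonempty subsets of a metric space is $R$-disjoint if $d(A,B)>R$ for all distinct $A,B\in\mathcal U$, where $d(A,B)=\inf\{d(a,b):a\in A,b\in B\}$. A family $\mathcal U$ is uniformly bounded if $\sup\{\operatorname{diam}U:U\in\mathcal U\}<\infty$. A metric space $X$ has asymptotic property C if for every sequence $R_0\le R_1\le R_2\le\cdots$ of positive reals there exist $n\ge 0$ and uniformly bounded $R_i$-disjoint families $\mathcal U_i$ ($i=0,\dots,n$) of subsets of $X$ such that $\bigcup_{i=0}^n\mathcal U_i$ covers $X$. The product $X\times Y$ carries any of the standard product metrics (e.g. $d((x,y),(x',y'))=\max(d_X(x,x'),d_Y(y,y'))$ or the sum metric; these are bi-Lipschitz equivalent). *)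

From Stdlib Require Import Lra.
From Stdlib Require Import Reals.
Open Scope R_scope.

Record MetricSpace := {
  mcarrier :> Type;
  mdist : mcarrier -> mcarrier -> R;
  mdist_nonneg : forall x y, 0 <= mdist x y;
  mdist_eq0 : forall x y, mdist x y = 0 <-> x = y;
  mdist_sym : forall x y, mdist x y = mdist y x;
  mdist_tri : forall x y z, mdist x z <= mdist x y + mdist y z
}.

(* d(A,B) = inf {d(a,b) : a in A, b in B} > R  iff there is r > R that is a
   lower bound of all distances d(a,b), a in A, b in B. *)
Definition setdist_gt {X : MetricSpace} (A B : X -> Prop) (R0 : R) : Prop :=
  exists r, R0 < r /\ forall a b, A a -> B b -> r <= mdist X a b.

Definition R_disjoint {X : MetricSpace} (R0 : R) (U : (X -> Prop) -> Prop) : Prop :=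
  (forall A, U A -> exists x, A x) /\
  (forall A B, U A -> U B -> A <> B -> setdist_gt A B R0).

Definition uniformly_bounded {X : MetricSpace} (U : (X -> Prop) -> Prop) : Prop :=
  exists D, forall A, U A -> forall a b, A a -> A b -> mdist X a b <= D.

Definition asymptotic_property_C (X : MetricSpace) : Prop :=
  forall Rs : nat -> R,
    (forall i, 0 < Rs i) -> (forall i, Rs i <= Rs (S i)) ->
    exists (n : nat) (U : nat -> (X -> Prop) -> Prop),
      (forall i, (i <= n)%nat -> uniformly_bounded (U i) /\ R_disjoint (Rs i) (U i)) /\
      (forall x : X, exists i A, (i <= n)%nat /\ U i A /\ A x).

Definition prod_dist (X Y : MetricSpace) (p q : X * Y) : R :=
  Rmax (mdist X (fst p) (fst q)) (mdist Y (snd p) (snd q)).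

Lemma prod_dist_nonneg X Y : forall p q, 0 <= prod_dist X Y p q.
Proof. intros p q; unfold prod_dist; eapply Rle_trans; [apply mdist_nonneg|apply Rmax_l]. Qed.

Lemma prod_dist_eq0 X Y : forall p q, prod_dist X Y p q = 0 <-> p = q.
Proof.
  intros [x1 y1] [x2 y2]; unfold prod_dist; simpl; split.
  - intros H.
    assert (H1 := Rmax_l (mdist X x1 x2) (mdist Y y1 y2)).
    assert (H2 := Rmax_r (mdist X x1 x2) (mdist Y y1 y2)).
    assert (E1 : mdist X x1 x2 = 0) by (pose proof (mdist_nonneg X x1 x2); lra).
    assert (E2 : mdist Y y1 y2 = 0) by (pose proof (mdist_nonneg Y y1 y2); lra).
    apply mdist_eq0 in E1; apply mdist_eq0 in E2; subst; reflexivity.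
  - intros H; inversion H; subst.
    rewrite (proj2 (mdist_eq0 X x2 x2) eq_refl), (proj2 (mdist_eq0 Y y2 y2) eq_refl).
    apply Rmax_left; lra.
Qed.

Lemma prod_dist_sym X Y : forall p q, prod_dist X Y p q = prod_dist X Y q p.
Proof. intros; unfold prod_dist; rewrite (mdist_sym X), (mdist_sym Y); reflexivity. Qed.

Lemma prod_dist_tri X Y : forall p q r, prod_dist X Y p r <= prod_dist X Y p q + prod_dist X Y q r.
Proof.
  intros p q r; unfold prod_dist.
  pose proof (mdist_tri X (fst p) (fst q) (fst r)).
  pose proof (mdist_tri Y (snd p) (snd q) (snd r)).
  pose proof (Rmax_l (mdist X (fst p) (fst q)) (mdist Y (snd p) (snd q))).
  pose proof (Rmax_r (mdist X (fst p) (fst q)) (mdist Y (snd p) (snd q))).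
  pose proof (Rmax_l (mdist X (fst q) (fst r)) (mdist Y (snd q) (snd r))).
  pose proof (Rmax_r (mdist X (fst q) (fst r)) (mdist Y (snd q) (snd r))).
  apply Rmax_lub; lra.
Qed.

Definition ProdMetric (X Y : MetricSpace) : MetricSpace :=
  {| mcarrier := X * Y; mdist := prod_dist X Y;
     mdist_nonneg := prod_dist_nonneg X Y; mdist_eq0 := prod_dist_eq0 X Y;
     mdist_sym := prod_dist_sym X Y; mdist_tri := prod_dist_tri X Y |}.

From Stdlib Require Import Reals.
From Stdlib Require Import Arith Lra Lia Classical ClassicalEpsilon.
Open Scope R_scope.

(* For every shift t, cover Y by families V t 0, ..., V t (M t) that are
   disjoint at the scales R_t, ..., R_(t + M t).  Cut the indices into
   consecutive blocks: block i starts at s_i and ends at e_i := s_i + M s_i,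
   with s_(i+1) = e_i + 1.  Cover X by families U 0, ..., U n that are
   R_(e_i)-disjoint.  The family of boxes A x B with A in U i and B in
   V s_i j then sits at level s_i + j: two distinct such boxes are separated
   either in the X factor, at scale R_(e_i) >= R_(s_i + j), or in the Y
   factor, at scale R_(s_i + j). *)

Definition property_C_cover (X : MetricSpace) (Rs : nat -> R) (n : nat)
    (U : nat -> (X -> Prop) -> Prop) : Prop :=
  (forall i, (i <= n)%nat -> uniformly_bounded (U i) /\ R_disjoint (Rs i) (U i)) /\
  (forall x : X, exists i A, (i <= n)%nat /\ U i A /\ A x).

Lemma shifted_property_C_covers (Y : MetricSpace) (Rs : nat -> R) :
  asymptotic_property_C Y -> (forall i, 0 < Rs i) -> Un_growing Rs ->
  exists (M : nat -> nat) (V : nat -> nat -> (Y -> Prop) -> Prop),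
    forall t, property_C_cover Y (fun j => Rs (t + j)%nat) (M t) (V t).
Proof.
  intros HY Rs_pos Rs_growing.
  assert (Hcov : forall t, exists MV : nat * (nat -> (Y -> Prop) -> Prop),
             property_C_cover Y (fun j => Rs (t + j)%nat) (fst MV) (snd MV)).
  { intro t; destruct (HY (fun j => Rs (t + j)%nat)) as [m [V HV]].
    - intro; apply Rs_pos.
    - intro j; rewrite Nat.add_succ_r; apply Rs_growing.
    - exists (m, V); exact HV. }
  destruct (choice _ Hcov) as [f Hf].
  exists (fun t => fst (f t)), (fun t => snd (f t)); exact Hf.
Qed.

Section Blocks.

Variable M : nat -> nat.

Fixpoint block_start (i : nat) : nat :=
  match i with
  | O => O
  | S i => S (block_start i + M (block_start i))
  end.

Definition block_end (i : nat) : nat := (block_start i + M (block_start i))%nat.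

Lemma block_end_lt_start i i' : (i < i')%nat -> (block_end i < block_start i')%nat.
Proof.
  unfold block_end; induction 1 as [|i' _ IH]; simpl; lia.
Qed.

Lemma block_end_le i i' : (i <= i')%nat -> (block_end i <= block_end i')%nat.
Proof.
  intros Hle; destruct (Nat.eq_dec i i') as [<-|Hne]; [lia|].
  pose proof (block_end_lt_start i i' ltac:(lia)); unfold block_end in *; lia.
Qed.

Lemma block_index_unique i j i' j' :
  (j <= M (block_start i))%nat -> (j' <= M (block_start i'))%nat ->
  (block_start i + j = block_start i' + j')%nat -> i = i'.
Proof.
  intros Hj Hj' Heq.
  destruct (lt_eq_lt_dec i i') as [[Hlt|Heqi]|Hlt]; [|exact Heqi|].
  - pose proof (block_end_lt_start i i' Hlt); unfold block_end in *; lia.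
  - pose proof (block_end_lt_start i' i Hlt); unfold block_end in *; lia.
Qed.

End Blocks.

Section Families.

Variable X : MetricSpace.

Lemma uniformly_bounded_sub (U U' : (X -> Prop) -> Prop) :
  (forall A, U' A -> U A) -> uniformly_bounded U -> uniformly_bounded U'.
Proof.
  intros Hsub [D HD]; exists D; intros A HA; apply HD, Hsub, HA.
Qed.

Lemma R_disjoint_sub r (U U' : (X -> Prop) -> Prop) :
  (forall A, U' A -> U A) -> R_disjoint r U -> R_disjoint r U'.
Proof.
  intros Hsub [Hne Hdis]; split.
  - intros A HA; apply Hne, Hsub, HA.
  - intros A B HA HB; apply Hdis; apply Hsub; assumption.
Qed.

Lemma R_disjoint_le r' r (U : (X -> Prop) -> Prop) :
  r' <= r -> R_disjoint r U -> R_disjoint r' U.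
Proof.
  intros Hr [Hne Hdis]; split; [exact Hne|].
  intros A B HA HB HAB; destruct (Hdis A B HA HB HAB) as [s [Hs Hd]].
  exists s; split; [lra|exact Hd].
Qed.

Lemma uniformly_bounded_empty : uniformly_bounded (fun _ : X -> Prop => False).
Proof. exists 0; intros _ []. Qed.

Lemma R_disjoint_empty r : R_disjoint r (fun _ : X -> Prop => False).
Proof. split; intros A; [intros []|intros B []]. Qed.

End Families.

Section Boxes.

Variables X Y : MetricSpace.

Definition box (A : X -> Prop) (B : Y -> Prop) : ProdMetric X Y -> Prop :=
  fun p => A (fst p) /\ B (snd p).

Definition product_family (U : (X -> Prop) -> Prop) (V : (Y -> Prop) -> Prop)
    (W : ProdMetric X Y -> Prop) : Prop :=
  exists A B, U A /\ V B /\ W = box A B.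

Lemma setdist_gt_box_l r A A' B B' :
  setdist_gt A A' r -> setdist_gt (box A B) (box A' B') r.
Proof.
  intros [s [Hs Hd]]; exists s; split; [exact Hs|].
  intros p q [Hp _] [Hq _]; simpl; unfold prod_dist.
  eapply Rle_trans; [|apply Rmax_l]; apply Hd; assumption.
Qed.

Lemma setdist_gt_box_r r A A' B B' :
  setdist_gt B B' r -> setdist_gt (box A B) (box A' B') r.
Proof.
  intros [s [Hs Hd]]; exists s; split; [exact Hs|].
  intros p q [_ Hp] [_ Hq]; simpl; unfold prod_dist.
  eapply Rle_trans; [|apply Rmax_r]; apply Hd; assumption.
Qed.

Lemma uniformly_bounded_product U V :
  uniformly_bounded U -> uniformly_bounded V ->
  uniformly_bounded (product_family U V).
Proof.
  intros [D HD] [E HE]; exists (Rmax D E).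
  intros W [A [B [HA [HB ->]]]] p q [HpA HpB] [HqA HqB]; simpl; unfold prod_dist.
  apply Rmax_lub.
  - eapply Rle_trans; [|apply Rmax_l]; apply (HD A HA); assumption.
  - eapply Rle_trans; [|apply Rmax_r]; apply (HE B HB); assumption.
Qed.

Lemma R_disjoint_product r U V :
  R_disjoint r U -> R_disjoint r V -> R_disjoint r (product_family U V).
Proof.
  intros [HUne HUdis] [HVne HVdis]; split.
  - intros W [A [B [HA [HB ->]]]].
    destruct (HUne A HA) as [x Hx], (HVne B HB) as [y Hy].
    exists (x, y); split; assumption.
  - intros W W' [A [B [HA [HB ->]]]] [A' [B' [HA' [HB' ->]]]] HWW'.
    destruct (classic (A = A')) as [<-|HAA'].
    + apply setdist_gt_box_r, HVdis; try assumption.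
      intros <-; apply HWW'; reflexivity.
    + apply setdist_gt_box_l, HUdis; assumption.
Qed.

End Boxes.

Section ProductCover.

Variables (X Y : MetricSpace) (Rs : nat -> R).
Hypothesis Rs_growing : Un_growing Rs.
Variables (M : nat -> nat) (V : nat -> nat -> (Y -> Prop) -> Prop).
Hypothesis V_cover : forall t, property_C_cover Y (fun j => Rs (t + j)%nat) (M t) (V t).
Variables (n : nat) (U : nat -> (X -> Prop) -> Prop).
Hypothesis U_cover : property_C_cover X (fun i => Rs (block_end M i)) n U.

Definition product_cover (k : nat) (W : ProdMetric X Y -> Prop) : Prop :=
  exists i j, (i <= n)%nat /\ (j <= M (block_start M i))%nat /\
    k = (block_start M i + j)%nat /\
    product_family X Y (U i) (V (block_start M i) j) W.

Lemma product_cover_in_block i j :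
  (j <= M (block_start M i))%nat -> forall W,
  product_cover (block_start M i + j) W ->
  product_family X Y (U i) (V (block_start M i) j) W.
Proof.
  intros Hj W [i' [j' [_ [Hj' [Hk HW]]]]].
  assert (i' = i) as -> by (apply (block_index_unique M i' j' i j); lia).
  assert (j' = j) as -> by lia.
  exact HW.
Qed.

Lemma product_cover_level k :
  uniformly_bounded (product_cover k) /\ R_disjoint (Rs k) (product_cover k).
Proof.
  destruct (classic (exists i j, (i <= n)%nat /\ (j <= M (block_start M i))%nat /\
                                 k = (block_start M i + j)%nat))
    as [[i [j [Hi [Hj ->]]]]|Hnone].
  - destruct (proj1 U_cover i Hi) as [HUb HUdis].
    destruct (proj1 (V_cover (block_start M i)) j Hj) as [HVb HVdis].
    assert (Hscale : Rs (block_start M i + j)%nat <= Rs (block_end M i)).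
    { apply Rge_le, growing_prop; [exact Rs_growing|unfold block_end; lia]. }
    split.
    + apply (uniformly_bounded_sub _ _ _ (product_cover_in_block i j Hj)).
      apply uniformly_bounded_product; assumption.
    + apply (R_disjoint_sub _ _ _ _ (product_cover_in_block i j Hj)).
      apply R_disjoint_product; [apply (R_disjoint_le _ _ _ _ Hscale)|]; assumption.
  - assert (Hempty : forall W, product_cover k W -> False).
    { intros W [i [j [Hi [Hj [Hk _]]]]]; apply Hnone; exists i, j; auto. }
    split.
    + exact (uniformly_bounded_sub _ _ _ Hempty (uniformly_bounded_empty _)).
    + exact (R_disjoint_sub _ _ _ _ Hempty (R_disjoint_empty _ _)).
Qed.

Lemma product_cover_covers (p : ProdMetric X Y) :
  exists k W, (k <= block_end M n)%nat /\ product_cover k W /\ W p.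
Proof.
  destruct p as [x y].
  destruct (proj2 U_cover x) as [i [A [Hi [HA Hx]]]].
  destruct (proj2 (V_cover (block_start M i)) y) as [j [B [Hj [HB Hy]]]].
  exists (block_start M i + j)%nat, (box X Y A B); repeat split; try assumption.
  - pose proof (block_end_le M i n Hi); unfold block_end in *; lia.
  - exists i, j; repeat split; try assumption.
    exists A, B; auto.
Qed.

Lemma product_cover_property_C :
  property_C_cover (ProdMetric X Y) Rs (block_end M n) product_cover.
Proof.
  split; [intros k _; apply product_cover_level|exact product_cover_covers].
Qed.

End ProductCover.

Theorem theorem3p1 (X Y : MetricSpace) :
  asymptotic_property_C X -> asymptotic_property_C Y ->
  asymptotic_property_C (ProdMetric X Y).
Proof.
  intros HX HY Rs Rs_pos Rs_growing.
  destruct (shifted_property_C_covers Y Rs HY Rs_pos Rs_growing) as [M [V HV]].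
  destruct (HX (fun i => Rs (block_end M i))) as [n [U HU]].
  - intro; apply Rs_pos.
  - intro i; apply Rge_le, growing_prop; [exact Rs_growing|].
    apply block_end_le; lia.
  - exists (block_end M n), (product_cover X Y M V n U).
    exact (product_cover_property_C X Y Rs Rs_growing M V HV n U HU).
Qed.
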